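(* Let $s\geq 3$ be an integer and let $q\in(0,1)$ be the root of $X^2-sX+1=0$ in $(0,1)$. Put $x_n=\dfrac{q^n-q^{-n}}{q-q^{-1}}$ for $n\in\mathbb{N}$ (these are integers), $x_0!=1$, $x_n!=x_1\cdots x_n$, and $\mathcal{N}(t)=\sum_{n\ge0}t^n/x_n!$. For $z\in\mathbb{C}$ and $t\in\mathbb{R}$ define $$\check z(t)=\frac{z}{\mathcal{N}(|z|^2)}\sum_{n=0}^{\infty}\frac{|z|^{2n}}{x_n!}\exp\big(i(x_{n+2}-x_{n+1})t\big).$$ Then for every $z\in\mathbb{C}$ the curve $t\mapsto\check z(t)$ is periodic with period $2\pi$.
   Context: $\check z(t)$ is the coherent-state expectation of the time-evolved lowering operator, i.e. the semi-classical phase-space trajectory for the $q$-deformed harmonic oscillator whose spectrum is $(x_{n+1})$. *)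

From Stdlib Require Import Reals.
From Coquelicot Require Import Coquelicot.
Open Scope R_scope.

Definition xq (q : R) (n : nat) : R := (q ^ n - / q ^ n) / (q - / q).

Fixpoint xfact (q : R) (n : nat) : R :=
  match n with
  | O => 1
  | S m => xfact q m * xq q (S m)
  end.

Definition Nq (q t : R) : R := Series (fun n => t ^ n / xfact q n).

Definition cexpi (theta : R) : C := (cos theta, sin theta).

Definition Csum (a : nat -> C) : C :=
  (Series (fun n => fst (a n)), Series (fun n => snd (a n))).

Definition zcheck (q : R) (z : C) (t : R) : C :=
  let r := (Cmod z) ^ 2 in
  Cmult (Cdiv z (RtoC (Nq q r)))
        (Csum (fun n => Cmult (RtoC (r ^ n / xfact q n))
                              (cexpi ((xq q (n + 2) - xq q (n + 1)) * t)))).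

(* The frequencies x_{n+2} - x_{n+1} are integers: q + 1/q = s, so the x_n satisfy the
   Chebyshev recurrence x_{n+2} = s x_{n+1} - x_n with x_0 = 0, x_1 = 1.  Every term of the
   series defining zcheck is therefore 2π-periodic in t. *)
From Stdlib Require Import Reals ZArith Lra Lia.
From Coquelicot Require Import Coquelicot.
Open Scope R_scope.

Lemma cos_period_Z (x : R) (k : Z) : cos (x + 2 * IZR k * PI) = cos x.
Proof.
  destruct (Z.le_gt_cases 0 k) as [Hk | Hk].
  - rewrite <- (Z2Nat.id k Hk), <- INR_IZR_INZ. apply cos_period.
  - replace k with (- Z.of_nat (Z.to_nat (- k)))%Z by lia.
    rewrite opp_IZR, <- INR_IZR_INZ.
    set (n := Z.to_nat (- k)).
    rewrite <- (cos_period (x + 2 * - INR n * PI) n). f_equal. ring.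
Qed.

Lemma sin_period_Z (x : R) (k : Z) : sin (x + 2 * IZR k * PI) = sin x.
Proof.
  rewrite !sin_cos. f_equal.
  replace (PI / 2 + (x + 2 * IZR k * PI)) with (PI / 2 + x + 2 * IZR k * PI) by ring.
  apply cos_period_Z.
Qed.

Lemma cexpi_period_Z (k : Z) (t : R) : cexpi (IZR k * (t + 2 * PI)) = cexpi (IZR k * t).
Proof.
  unfold cexpi.
  replace (IZR k * (t + 2 * PI)) with (IZR k * t + 2 * IZR k * PI) by ring.
  now rewrite cos_period_Z, sin_period_Z.
Qed.

Lemma xq_0 (q : R) : xq q 0 = 0.
Proof. unfold xq. simpl. rewrite Rinv_1. unfold Rdiv. ring. Qed.

Lemma xq_1 (q : R) : q - / q <> 0 -> xq q 1 = 1.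
Proof. intro Hd. unfold xq, Rdiv. rewrite pow_1. now apply Rinv_r. Qed.

Lemma xq_SS (q : R) (n : nat) : q <> 0 -> q - / q <> 0 ->
  xq q (S (S n)) = (q + / q) * xq q (S n) - xq q n.
Proof.
  intros Hq Hd. unfold xq.
  assert (Hn : q ^ n <> 0) by now apply pow_nonzero.
  assert (Hqq : q * q - 1 <> 0).
  { replace (q * q - 1) with (q * (q - / q)) by (field; exact Hq).
    now apply Rmult_integral_contrapositive. }
  simpl. field. now repeat split.
Qed.

Lemma xq_integral (q : R) (k : Z) : q <> 0 -> q - / q <> 0 -> q + / q = IZR k ->
  forall n, exists m : Z, xq q n = IZR m.
Proof.
  intros Hq Hd Hk.
  assert (Hpair : forall n, exists a b : Z, xq q n = IZR a /\ xq q (S n) = IZR b).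
  { induction n as [|n [a [b [Ha Hb]]]].
    - exists 0%Z, 1%Z. now rewrite xq_0, xq_1.
    - exists b, (k * b - a)%Z. split; [exact Hb|].
      now rewrite xq_SS, Hk, Ha, Hb, minus_IZR, mult_IZR. }
  intro n. destruct (Hpair n) as [a [_ [Ha _]]]. now exists a.
Qed.

Lemma zcheck_period_2PI (q : R) (z : C) :
  (forall n, exists m : Z, xq q (n + 2) - xq q (n + 1) = IZR m) ->
  forall t, zcheck q z (t + 2 * PI) = zcheck q z t.
Proof.
  intros Hgap t. unfold zcheck, Csum.
  assert (Hterm : forall n, cexpi ((xq q (n + 2) - xq q (n + 1)) * (t + 2 * PI))
                          = cexpi ((xq q (n + 2) - xq q (n + 1)) * t)).
  { intro n. destruct (Hgap n) as [m ->]. apply cexpi_period_Z. }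
  do 2 f_equal; apply Series_ext; intro n; now rewrite Hterm.
Qed.

Theorem mainTheorem5 (s : nat) (q : R) :
  (3 <= s)%nat ->
  0 < q < 1 ->
  q ^ 2 - INR s * q + 1 = 0 ->
  forall (z : C) (t : R), zcheck q z (t + 2 * PI) = zcheck q z t.
Proof.
  (* [3 <= s] only guarantees that a root [q] in (0,1) exists; here [q] is given. *)
  intros _ Hq Hroot z.
  assert (Hq0 : q <> 0) by lra.
  assert (Hinv : 1 < / q) by (rewrite <- Rinv_1; apply Rinv_lt_contravar; lra).
  assert (Hd : q - / q <> 0) by lra.
  assert (Hs : q + / q = IZR (Z.of_nat s)).
  { rewrite <- INR_IZR_INZ. apply (Rmult_eq_reg_r q); [|exact Hq0].
    field_simplify; [nra | exact Hq0]. }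
  apply zcheck_period_2PI. intro n.
  destruct (xq_integral q _ Hq0 Hd Hs (n + 2)) as [a Ha].
  destruct (xq_integral q _ Hq0 Hd Hs (n + 1)) as [b Hb].
  exists (a - b)%Z. now rewrite Ha, Hb, minus_IZR.
Qed.
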